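(* The sequential specification $\mathsf{Register}$, defined by the ordered rules $R_0, R_{WR}$, is step-by-step linearizable: for every differentiated history $h$ and every data value $x$, (1) if $h\sqsubseteq u$ for some $u\in M_x(R_0)$ and $h\setminus x\sqsubseteq[\![R_0]\!]$, then $h\sqsubseteq[\![R_0]\!]$; and (2) if $h\sqsubseteq u$ for some $u\in M_x(R_{WR})$ and $h\setminus x\sqsubseteq [\![R_0,R_{WR}]\!]$, then $h\sqsubseteq[\![R_0,R_{WR}]\!]$.
   Context: Data values are natural numbers. Operations (resp. method events) are pairs of a method in $\{Write, Read\}$ and a data value ($Read(x)$ returns $x$). A history $h$ is a finite set of operations with a strict partial order $<_{hb}$ (happens-before) that is an interval order (if $o_1<_{hb}o_2$ and $o_3<_{hb}o_4$ then $o_1<_{hb}o_4$ or $o_3<_{hb}o_2$). A sequential execution is a finite sequence of method events. $h$ is differentiated if each data value is carried by at most one $Write$ operation. $h\sqsubseteq u$ means there is a bijection between operations of $h$ and positions of $u$ preserving method and data value such that $o_1<_{hb}o_2$ implies the image of $o_1$ precedes that of $o_2$; $h\sqsubseteq S$ means $h\sqsubseteq u$ for some $u\in S$. $h\setminus x$ removes all operations with data value $x$. Rules: $R_0$: $\epsilon\in\mathsf{Register}$; $R_{WR}$: $u\in\mathsf{Register}\Rightarrow Write(x)\cdot Read(x)^*\cdot u\in\mathsf{Register}$ ($x$ not occurring in $u$). $[\![R_0]\!]=\{\epsilon\}$ and $[\![R_0,R_{WR}]\!]=\mathsf{Register}$ is the smallest set closed under both rules. Matching sets with witness $x$: $M_x(R_0)=\{\epsilon\}$;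 $M_x(R_{WR})$ = sequences $Write(x)\cdot Read(x)^k\cdot u$, $k\ge 0$, with $x$ not occurring in $u$. *)

From HB Require Import structures.
From mathcomp Require Import all_boot.
Set Implicit Arguments. Unset Strict Implicit. Unset Printing Implicit Defensive.

Inductive method := Write | Read.
Definition method_eqb (m1 m2 : method) : bool :=
  match m1, m2 with Write, Write | Read, Read => true | _, _ => false end.
Lemma method_eqP : Equality.axiom method_eqb.
Proof. by case; case; constructor. Qed.
HB.instance Definition _ := hasDecEq.Build method method_eqP.

Definition event := (method * nat)%type.
Definition meth (e : event) : method := e.1.
Definition dval (e : event) : nat := e.2.

Definition seqexec := seq event.

(* A history: a finite set of operations (the carrier, so that several
   operations may carry the same label), each labelled by a method event,
   with a happens-before relation. *)
Record history := History {
  op : finType;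
  lab : op -> event;
  hb : rel op
}.
Arguments lab : clear implicits.
Arguments hb : clear implicits.

(* Well-formedness: hb is a strict partial order which is an interval order. *)
Definition is_history (h : history) : Prop :=
  (forall o, ~~ hb h o o) /\
  (forall o1 o2 o3, hb h o1 o2 -> hb h o2 o3 -> hb h o1 o3) /\
  (forall o1 o2 o3 o4, hb h o1 o2 -> hb h o3 o4 -> hb h o1 o4 || hb h o3 o2).

Definition differentiated (h : history) : Prop :=
  forall (o1 o2 : op h) (v : nat),
    lab h o1 = (Write, v) -> lab h o2 = (Write, v) -> o1 = o2.

Definition hsub (h : history) (u : seqexec) : Prop :=
  exists f : op h -> 'I_(size u),
    bijective f /\
    (forall o, nth (Write, 0) u (f o) = lab h o) /\
    (forall o1 o2, hb h o1 o2 -> f o1 < f o2).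

Definition hsubS (h : history) (S : seqexec -> Prop) : Prop :=
  exists u, S u /\ hsub h u.

Definition hremove (h : history) (x : nat) : history :=
  @History {o : op h | dval (lab h o) != x}
           (fun o => lab h (val o))
           (fun o1 o2 => hb h (val o1) (val o2)).

Definition occurs (x : nat) (u : seqexec) : bool := x \in map dval u.

Definition Sem_R0 (u : seqexec) : Prop := u = [::].

Inductive Register : seqexec -> Prop :=
| Reg_R0 : Register [::]
| Reg_RWR (x k : nat) (u : seqexec) :
    Register u -> ~~ occurs x u ->
    Register ((Write, x) :: nseq k (Read, x) ++ u).

Definition M_R0 (x : nat) (u : seqexec) : Prop := u = [::].
Definition M_RWR (x : nat) (u : seqexec) : Prop :=
  exists (k : nat) (v : seqexec),
    u = (Write, x) :: nseq k (Read, x) ++ v /\ ~~ occurs x v.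

From mathcomp Require Import all_boot.
Set Implicit Arguments. Unset Strict Implicit. Unset Printing Implicit Defensive.

(** In an embedding of [h] into [p ++ v], where every event of [p] carries
    the value [x] and [v] does not mention [x], the operations on [x] fill
    exactly the positions of [p].  Keeping those positions and placing the other
    operations after [p] according to an embedding of [h \ x] into [w] therefore
    embeds [h] into [p ++ w]; happens-before is respected because an operation
    on [x] cannot follow another operation, which would then lie in [p] too.
    For [p = Write(x) Read(x)^k] and [w] a register execution (which cannot
    mention [x]), [p ++ w] is again a register execution. *)

Lemma inj_surj_bij (T T' : finType) (g : T -> T') :
  injective g -> (forall j, exists o, g o = j) -> bijective g.
Proof.
move=> g_inj g_surj; apply: (inj_card_bij g_inj).
rewrite -(card_codom g_inj); apply/subset_leq_card/subsetP => j _.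
by have [o <-] := g_surj j; apply: codom_f.
Qed.

Lemma hsub_occurs (h : history) (u : seqexec) (y : nat) :
  hsub h u -> occurs y u -> exists o, dval (lab h o) = y.
Proof.
move=> [f [[finv _ finvK] [f_lab _]]] /mapP [e e_in ->].
have e_idx : index e u < size u by rewrite index_mem.
exists (finv (Ordinal e_idx)).
by rewrite -f_lab finvK /= nth_index.
Qed.

Lemma hsub_hremove_not_occurs (h : history) (x : nat) (w : seqexec) :
  hsub (hremove h x) w -> ~~ occurs x w.
Proof.
move=> w_h; apply/negP => /(hsub_occurs w_h) [o o_x].
by have := valP o; rewrite /= o_x eqxx.
Qed.

Lemma nth_cat_dval_eq (d : event) (x : nat) (p v : seqexec) (i : nat) :
  all (fun e => dval e == x) p -> ~~ occurs x v -> i < size (p ++ v) ->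
  (dval (nth d (p ++ v) i) == x) = (i < size p).
Proof.
move=> p_x v_nx; rewrite nth_cat size_cat; case: ifP => [i_p _ | i_p i_pv].
  exact: (all_nthP d p_x).
have i_v : i - size p < size v by rewrite ltn_subLR // leqNgt i_p.
apply/negbTE/eqP => v_x; move/negP: v_nx; apply.
by rewrite /occurs -v_x map_f // mem_nth.
Qed.

Variant hremove_spec (h : history) (x : nat) (o : op h) : Prop :=
  | HremoveDropped of dval (lab h o) == x
  | HremoveKept (o' : op (hremove h x)) of o = val o'.

Lemma hremoveP (h : history) (x : nat) (o : op h) : hremove_spec x o.
Proof.
case: (boolP (dval (lab h o) == x)) => [o_x | o_nx]; first exact: HremoveDropped.
by apply: (@HremoveKept _ _ _ (exist _ o o_nx)).
Qed.

Section ReplaceSuffix.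

Variables (h : history) (x : nat) (p v w : seqexec).
Hypotheses (p_x : all (fun e => dval e == x) p) (v_nx : ~~ occurs x v).

Variables (f : op h -> 'I_(size (p ++ v))) (f' : op (hremove h x) -> 'I_(size w)).
Hypotheses (f_bij : bijective f) (f'_bij : bijective f').
Hypothesis f_lab : forall o, nth (Write, 0) (p ++ v) (f o) = lab h o.
Hypothesis f'_lab : forall o', nth (Write, 0) w (f' o') = lab (hremove h x) o'.
Hypothesis f_hb : forall o1 o2, hb h o1 o2 -> f o1 < f o2.
Hypothesis f'_hb : forall o1' o2', hb (hremove h x) o1' o2' -> f' o1' < f' o2'.

Lemma dropped_in_prefix (o : op h) : (dval (lab h o) == x) = (f o < size p).
Proof. by rewrite -f_lab nth_cat_dval_eq. Qed.

Definition glued_pos (o : op h) : nat :=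
  if insub o is Some o' then size p + f' o' else f o.

Lemma glued_pos_dropped (o : op h) : dval (lab h o) == x -> glued_pos o = f o.
Proof. by move=> o_x; rewrite /glued_pos insubN ?o_x. Qed.

Lemma glued_pos_kept (o' : op (hremove h x)) : glued_pos (val o') = size p + f' o'.
Proof. by rewrite /glued_pos valK. Qed.

Lemma glued_pos_prefix (o : op h) : (glued_pos o < size p) = (dval (lab h o) == x).
Proof.
case: (hremoveP x o) => [o_x | o' ->].
  by rewrite glued_pos_dropped // -dropped_in_prefix.
by rewrite glued_pos_kept ltnNge leq_addr; apply/esym/negbTE/(valP o').
Qed.

Lemma glued_pos_lt (o : op h) : glued_pos o < size (p ++ w).
Proof.
rewrite size_cat; case: (hremoveP x o) => [o_x | o' ->].
  by rewrite glued_pos_dropped // ltn_addr // -dropped_in_prefix.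
by rewrite glued_pos_kept ltn_add2l.
Qed.

Definition glued (o : op h) : 'I_(size (p ++ w)) := Ordinal (glued_pos_lt o).

Lemma glued_inj : injective glued.
Proof.
move=> o1 o2 /(congr1 val) /= eq12.
have := glued_pos_prefix o1; rewrite eq12 glued_pos_prefix.
case: (hremoveP x o1) eq12 => [o1_x | o1' ->]; case: (hremoveP x o2) => [o2_x | o2' ->].
- by rewrite !glued_pos_dropped // => /val_inj/(bij_inj f_bij).
- by rewrite o1_x (negbTE (valP o2')).
- by rewrite o2_x (negbTE (valP o1')).
- by rewrite !glued_pos_kept => /addnI/val_inj/(bij_inj f'_bij) ->.
Qed.

Lemma glued_surj (j : 'I_(size (p ++ w))) : exists o, glued o = j.
Proof.
have [finv _ finvK] := f_bij; have [f'inv _ f'invK] := f'_bij.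
case: (ltnP j (size p)) => [j_p | p_j].
  have j_pv : j < size (p ++ v) by rewrite (leq_trans j_p) // size_cat leq_addr.
  pose o := finv (Ordinal j_pv).
  have fo : (f o : nat) = j by rewrite finvK.
  exists o; apply: val_inj => /=.
  by rewrite glued_pos_dropped ?dropped_in_prefix fo.
have j_w : j - size p < size w by rewrite ltn_subLR // -size_cat.
exists (val (f'inv (Ordinal j_w))); apply: val_inj => /=.
by rewrite glued_pos_kept f'invK /= subnKC.
Qed.

Lemma glued_lab (o : op h) : nth (Write, 0) (p ++ w) (glued o) = lab h o.
Proof.
rewrite /= nth_cat glued_pos_prefix.
case: (hremoveP x o) => [o_x | o' ->]; rewrite ?(negbTE (valP o')).
  by rewrite o_x glued_pos_dropped // -f_lab nth_cat -dropped_in_prefix o_x.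
by rewrite glued_pos_kept addKn f'_lab.
Qed.

Lemma glued_hb (o1 o2 : op h) : hb h o1 o2 -> glued o1 < glued o2.
Proof.
case: (hremoveP x o1) => [o1_x | o1' ->]; case: (hremoveP x o2) => [o2_x | o2' ->] /= o12.
- by rewrite !glued_pos_dropped //; apply: f_hb.
- by rewrite glued_pos_kept; move: o1_x; rewrite -glued_pos_prefix => /ltn_addr.
- have : f (val o1') < size p by rewrite (ltn_trans (f_hb o12)) // -dropped_in_prefix.
  by rewrite -dropped_in_prefix (negbTE (valP o1')).
- by rewrite !glued_pos_kept ltn_add2l; apply: f'_hb.
Qed.

End ReplaceSuffix.

Lemma hsub_cat_replace (h : history) (x : nat) (p v w : seqexec) :
  all (fun e => dval e == x) p -> ~~ occurs x v ->
  hsub h (p ++ v) -> hsub (hremove h x) w -> hsub h (p ++ w).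
Proof.
move=> p_x v_nx [f [f_bij [f_lab f_hb]]] [f' [f'_bij [f'_lab f'_hb]]].
exists (glued p_x v_nx f' f_lab); split; last split.
- by apply: inj_surj_bij; [apply: glued_inj | apply: glued_surj].
- exact: glued_lab.
- exact: glued_hb.
Qed.

Theorem mainTheorem2 (h : history) (x : nat) :
  is_history h -> differentiated h ->
  ((exists u, M_R0 x u /\ hsub h u) ->
     hsubS (hremove h x) Sem_R0 -> hsubS h Sem_R0)
  /\
  ((exists u, M_RWR x u /\ hsub h u) ->
     hsubS (hremove h x) Register -> hsubS h Register).
Proof.
move=> _ _; split.
  by move=> [u [-> h_u]] _; exists [::].
move=> [_ [[k [v [-> v_nx]]] h_u]] [w [w_reg hx_w]].
have prefix_x : all (fun e => dval e == x) ((Write, x) :: nseq k (Read, x)).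
  by rewrite /= eqxx all_nseq eqxx orbT.
exists ((Write, x) :: nseq k (Read, x) ++ w); split.
  exact: Reg_RWR w_reg (hsub_hremove_not_occurs hx_w).
exact: (hsub_cat_replace prefix_x v_nx h_u hx_w).
Qed.
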